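(* Let $\ell \ge 0$, let $\kappa>0$ and $g>0$ be constants, and let $n_{\mathbf u}, n_\theta, m_{\mathbf u}, m_\theta$ be positive integers. Let $M_\ell\in\mathbb{R}^{n_{\mathbf u}\times n_{\mathbf u}}$ be symmetric positive definite, $W_\ell\in\mathbb{R}^{n_\theta\times n_\theta}$ be diagonal with positive diagonal entries, and $B_\ell\in\mathbb{R}^{n_\theta\times n_{\mathbf u}}$, and set $$\mathcal{A}_\ell=\begin{bmatrix} M_\ell & B_\ell^T\\ B_\ell & -\kappa^2 W_\ell\end{bmatrix}.$$ Let $P_{\mathbf u}\in\mathbb{R}^{n_{\mathbf u}\times m_{\mathbf u}}$ and $P_\theta\in\mathbb{R}^{n_\theta\times m_\theta}$ have full column rank, let $\mathcal P=\begin{bmatrix}P_{\mathbf u}&0\\0&P_\theta\end{bmatrix}$, and define the coarse-level matrices $\mathcal{A}_{\ell+1}=\mathcal P^T\mathcal A_\ell\mathcal P$ and $W_{\ell+1}=P_\theta^TW_\ell P_\theta$ (so that $\mathcal{A}_{\ell+1}=\begin{bmatrix} P_{\mathbf u}^TM_\ell P_{\mathbf u} & (P_\theta^T B_\ell P_{\mathbf u})^T\\ P_\theta^T B_\ell P_{\mathbf u} & -\kappa^2 W_{\ell+1}\end{bmatrix}$). Let $\xi_\ell(\omega)\sim\mathcal N(0,I)$ be a standard Gaussian random vector in $\mathbb{R}^{n_\theta}$, and let the fine-level Gaussian field sample $\theta_\ell(\omega)$ be defined by $$\begin{bmatrix}\mathbf u_\ell\\ \theta_\ell(\omega)\end{bmatrix}=\mathcal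 A_\ell^{-1}\begin{bmatrix}0\\ -gW_\ell^{1/2}\xi_\ell(\omega)\end{bmatrix}.$$ Let $\mathcal F_\ell=\begin{bmatrix}0\\ -gW_\ell^{1/2}\xi_\ell(\omega)\end{bmatrix}$ and let $\delta U_\ell=\begin{bmatrix}\delta\mathbf u_\ell\\ \delta\theta_\ell(\omega)\end{bmatrix}$, $U_{\ell+1}=\begin{bmatrix}\mathbf u_{\ell+1}\\ \theta_{\ell+1}(\omega)\end{bmatrix}$ solve $$\begin{bmatrix}\mathcal A_\ell & \mathcal A_\ell\mathcal P\\ \mathcal P^T\mathcal A_\ell & 0\end{bmatrix}\begin{bmatrix}\delta U_\ell\\ U_{\ell+1}\end{bmatrix}=\begin{bmatrix}\mathcal F_\ell\\ 0\end{bmatrix}.$$ Then $\theta_\ell(\omega)=P_\theta\,\theta_{\ell+1}(\omega)+\delta\theta_\ell(\omega)$, and $\theta_{\ell+1}(\omega)$ is a coarse-level sample of the Gaussian random field from the same distribution, namely $$\begin{bmatrix}\mathbf u_{\ell+1}\\ \theta_{\ell+1}(\omega)\end{bmatrix}=\mathcal A_{\ell+1}^{-1}\begin{bmatrix}0\\ -gW_{\ell+1}^{1/2}\xi_{\ell+1}(\omega)\end{bmatrix},\qquad \xi_{\ell+1}(\omega):=W_{\ell+1}^{-1/2}P_\theta^TW_\ell^{1/2}\xi_\ell(\omega)\sim\mathcal N(0,I).$$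
   Context: This arises from a mixed finite element discretization (lowest-order Raviart–Thomas for the flux $\mathbf u$, piecewise constants for $\theta$) of the stochastic reaction–diffusion equation $(\kappa^2-\Delta)\theta = g\mathcal W$ with white noise $\mathcal W$: $M_\ell$ is the flux mass matrix, $B_\ell$ the discrete divergence, $W_\ell$ the (diagonal) mass matrix of piecewise constants at level $\ell$, and $P_{\mathbf u},P_\theta$ are interpolation (prolongation) operators from a coarser level $\ell+1$ to level $\ell$. For a symmetric positive definite matrix $W$, $W^{1/2}$ denotes its symmetric positive definite square root and $W^{-1/2}$ its inverse. *)

From HB Require Import structures.
From mathcomp Require Import all_boot all_order all_algebra.
From mathcomp Require Import all_classical all_reals all_analysis.
Set Implicit Arguments. Unset Strict Implicit. Unset Printing Implicit Defensive.
Import Order.TTheory GRing.Theory Num.Theory.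
Local Open Scope ring_scope.
Local Open Scope classical_set_scope.

Definition is_spd {R : realType} {n : nat} (A : 'M[R]_n) : Prop :=
  A^T = A /\ forall x : 'cV[R]_n, x != 0 -> 0 < (x^T *m A *m x) 0 0.

Definition is_spd_sqrt {R : realType} {n : nat} (S W : 'M[R]_n) : Prop :=
  is_spd S /\ S *m S = W.

(* W^{1/2}: the symmetric positive definite square root of W (chosen
   classically; it exists and is unique for W SPD) *)
Definition spd_sqrt {R : realType} {n : nat} (W : 'M[R]_n) : 'M[R]_n :=
  xget 0 (fun S => is_spd_sqrt S W).

(* Standard Gaussian random vector X ~ N(0, I) in R^n, via the standard
   definition of the multivariate normal: every linear functional t^T X is
   (univariate) normal with mean t^T 0 = 0 and variance t^T I t = t^T t.
   (For t = 0 the functional is identically 0, which is trivially the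
   degenerate N(0,0); the library's normal_prob 0 0 is not the Dirac mass,
   so that case is excluded.) *)
Definition std_gaussian_vec {R : realType} {d : measure_display}
  {T : measurableType d} (P : probability T R) {n : nat}
  (X : T -> 'cV[R]_n) : Prop :=
  forall t : 'cV[R]_n, t != 0 ->
    measurable_fun setT (fun w => (t^T *m X w) 0 0) /\
    forall A : set R, measurable A ->
      P ((fun w => (t^T *m X w) 0 0) @^-1` A)
      = normal_prob 0 (Num.sqrt ((t^T *m t) 0 0)) A.

Definition saddle {R : realType} {nu nt : nat} (M : 'M[R]_nu)
  (B : 'M[R]_(nt, nu)) (W : 'M[R]_nt) (kappa : R) : 'M[R]_(nu + nt) :=
  block_mx M B^T B (- (kappa ^+ 2) *: W).

Definition prolong {R : realType} {nu nt mu mt : nat} (Pu : 'M[R]_(nu, mu))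
  (Pt : 'M[R]_(nt, mt)) : 'M[R]_(nu + nt, mu + mt) :=
  block_mx Pu 0 0 Pt.

Definition rhs {R : realType} (nu : nat) {nt : nat} (g : R) (S : 'M[R]_nt)
  (xi : 'cV[R]_nt) : 'cV[R]_(nu + nt) :=
  col_mx 0 (- g *: (S *m xi)).

From HB Require Import structures.
From mathcomp Require Import all_boot all_order all_algebra.
From mathcomp Require Import all_classical all_reals all_analysis.
From mathcomp Require Import complex ring.
Set Implicit Arguments. Unset Strict Implicit. Unset Printing Implicit Defensive.
Import Order.TTheory GRing.Theory Num.Theory.
Local Open Scope ring_scope.
Local Open Scope classical_set_scope.

(** The first block row of the two-level system says that
    [A_l (dU + P U_(l+1)) = F_l], so the fine solution splits as
    [dU + P U_(l+1)]; the second block row is Galerkin orthogonality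
    [P^T A_l dU = 0], whence [A_(l+1) U_(l+1) = P^T F_l], and [P^T F_l] is the
    coarse right-hand side built from [xi_(l+1) = C xi_l] with
    [C = W_(l+1)^(-1/2) P_t^T W_l^(1/2)].  Since
    [C C^T = W_(l+1)^(-1/2) W_(l+1) W_(l+1)^(-1/2) = I], each functional
    [t^T xi_(l+1) = (C^T t)^T xi_l] has variance [|C^T t|^2 = |t|^2], so
    [xi_(l+1)] is again standard Gaussian.

    The saddle-point matrices are invertible because [diag(I, -I) A] has the
    positive definite quadratic form [a^T M a + kappa^2 b^T W b]; the coarse
    matrix is again of saddle-point type since [P] is block diagonal.  As
    [W^(1/2)] is picked by choice, SPD square roots must be shown to exist:
    a real symmetric matrix has a real eigenvector (its complex eigenvalues
    are real), a Householder reflection deflates it to [diag(a, D)], and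
    induction on the size finishes. *)

Section QuadraticForm.
Variable R : realFieldType.

Definition posdefmx n (A : 'M[R]_n) :=
  forall x : 'cV[R]_n, x != 0 -> 0 < (x^T *m A *m x) 0 0.

Lemma trmx11 (a : 'M[R]_1) : a^T = a.
Proof. by rewrite [a]mx11_scalar tr_scalar_mx. Qed.

Lemma trmx_bilin m n (x : 'cV[R]_m) (A : 'M[R]_(m, n)) (y : 'cV[R]_n) :
  x^T *m A *m y = y^T *m A^T *m x.
Proof. by rewrite -[LHS]trmx11 !trmx_mul trmxK mulmxA. Qed.

Lemma dotmx_self_sum n (x : 'cV[R]_n) : (x^T *m x) 0 0 = \sum_i x i 0 ^+ 2.
Proof. by rewrite mxE; apply: eq_bigr => i _; rewrite !mxE expr2. Qed.

Lemma dotmx_self_ge0 n (x : 'cV[R]_n) : 0 <= (x^T *m x) 0 0.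
Proof. by rewrite dotmx_self_sum sumr_ge0 // => i _; apply: sqr_ge0. Qed.

Lemma dotmx_self_eq0 n (x : 'cV[R]_n) : ((x^T *m x) 0 0 == 0) = (x == 0).
Proof.
apply/idP/eqP => [|->]; last by rewrite mulmx0 mxE.
rewrite dotmx_self_sum psumr_eq0 => [/allP x0|i _]; last exact: sqr_ge0.
apply/matrixP => i j; rewrite (ord1 j) mxE.
by apply/eqP; rewrite -sqrf_eq0; apply: x0; rewrite mem_index_enum.
Qed.

Lemma dotmx_self_gt0 n (x : 'cV[R]_n) : x != 0 -> 0 < (x^T *m x) 0 0.
Proof. by rewrite lt_def dotmx_self_ge0 dotmx_self_eq0 andbT. Qed.

Lemma unitmx_ker0 n (A : 'M[R]_n) :
  (forall x : 'cV[R]_n, A *m x = 0 -> x = 0) -> A \in unitmx.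
Proof.
move=> kerA; rewrite -unitmx_tr -row_free_unit; apply: inj_row_free => v vA0.
by rewrite -[v]trmxK (kerA v^T) ?trmx0 // -[A]trmxK -trmx_mul vA0 trmx0.
Qed.

Lemma mulmx_col_full_eq0 m n (P : 'M[R]_(m, n)) (x : 'cV[R]_n) :
  \rank P = n -> (P *m x == 0) = (x == 0).
Proof.
move=> rP; have fP : row_free P^T by rewrite /row_free mxrank_tr rP.
by rewrite -trmx_eq0 trmx_mul mulmx_free_eq0 // trmx_eq0.
Qed.

Section PosDef.
Variables (n : nat) (A : 'M[R]_n).
Hypothesis pA : posdefmx A.

Lemma posdefmx_ge0 (x : 'cV[R]_n) : 0 <= (x^T *m A *m x) 0 0.
Proof.
have [->|x0] := eqVneq x 0; first by rewrite mulmx0 mxE.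
exact/ltW/pA.
Qed.

Lemma posdefmx_eq0 (x : 'cV[R]_n) : ((x^T *m A *m x) 0 0 == 0) = (x == 0).
Proof.
apply/idP/idP => [|/eqP->]; last by rewrite mulmx0 mxE.
by apply: contraLR => /pA/gt_eqF->.
Qed.

Lemma posdefmx_unit : A \in unitmx.
Proof.
apply: unitmx_ker0 => x Ax0; apply/eqP.
by rewrite -posdefmx_eq0 -mulmxA Ax0 mulmx0 mxE.
Qed.

Lemma posdefmx_congr m (P : 'M[R]_(n, m)) :
  \rank P = m -> posdefmx (P^T *m A *m P).
Proof.
move=> rP x x0; have Px0 : P *m x != 0 by rewrite mulmx_col_full_eq0.
by have := pA Px0; rewrite trmx_mul !mulmxA.
Qed.

Lemma posdefmx_scale c : 0 < c -> posdefmx (c *: A).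
Proof.
by move=> c0 x /pA xAx; rewrite -scalemxAr -scalemxAl mxE mulr_gt0.
Qed.

End PosDef.

Lemma posdefmx1 n : posdefmx (1%:M : 'M[R]_n).
Proof. by move=> x; rewrite mulmx1; apply: dotmx_self_gt0. Qed.

Lemma posdefmx_scalar n c : 0 < c -> posdefmx (c%:M : 'M[R]_n).
Proof. by rewrite -scalemx1; apply/posdefmx_scale/posdefmx1. Qed.

Lemma quad_block_diag m n (X : 'M[R]_m) (Y : 'M[R]_n)
    (a : 'cV[R]_m) (b : 'cV[R]_n) :
  (col_mx a b)^T *m block_mx X 0 0 Y *m col_mx a b
  = a^T *m X *m a + b^T *m Y *m b.
Proof.
by rewrite tr_col_mx mul_row_block !mulmx0 addr0 add0r mul_row_col.
Qed.

Lemma posdefmx_block_diag m n (X : 'M[R]_m) (Y : 'M[R]_n) :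
  posdefmx (block_mx X 0 0 Y) <-> posdefmx X /\ posdefmx Y.
Proof.
split=> [pXY|[pX pY] z z0].
  split=> [a a0|b b0].
    have := pXY (col_mx a 0); rewrite quad_block_diag trmx0 !mul0mx addr0.
    by apply; rewrite col_mx_eq0 negb_and a0.
  have := pXY (col_mx 0 b); rewrite quad_block_diag trmx0 !mul0mx add0r.
  by apply; rewrite col_mx_eq0 negb_and b0 orbT.
rewrite -[z]vsubmxK col_mx_eq0 negb_and in z0.
rewrite -[z]vsubmxK quad_block_diag mxE.
case/orP: z0 => [/pX aXa|/pY bYb].
  by apply: (lt_le_trans aXa); rewrite lerDl posdefmx_ge0.
by apply: (lt_le_trans bYb); rewrite lerDr posdefmx_ge0.
Qed.

Lemma posdefmx_diag n (W : 'M[R]_n) :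
  is_diag_mx W -> (forall i, 0 < W i i) -> W^T = W /\ posdefmx W.
Proof.
move=> /is_diag_mxP dW Wpos; split.
  apply/matrixP => i j; rewrite mxE.
  by have [->|ij] := eqVneq i j; rewrite // !dW // eq_sym.
move=> x x0; have -> : (x^T *m W *m x) 0 0 = \sum_i W i i * x i 0 ^+ 2.
  rewrite mxE; apply: eq_bigr => j _; rewrite mxE (bigD1 j) //= big1.
    by rewrite addr0 !mxE mulrAC mulrC expr2.
  by move=> i ij; rewrite dW ?mulr0 // eq_sym.
rewrite lt_def sumr_ge0 ?andbT => [|i _]; last first.
  by rewrite mulr_ge0 ?sqr_ge0 ?ltW.
apply: contraNN x0; rewrite psumr_eq0 => [/allP Wx0|i _]; last first.
  by rewrite mulr_ge0 ?sqr_ge0 ?ltW.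
apply/eqP/matrixP => i j; rewrite (ord1 j) mxE; apply/eqP.
have /Wx0 := mem_index_enum i.
by rewrite mulf_eq0 sqrf_eq0 gt_eqF.
Qed.

End QuadraticForm.

Section RealSymmetric.
Variable R : realFieldType.

(** With [x + i y] an eigenvector for [a + i b], this says that a real
    symmetric matrix has only real eigenvalues. *)
Lemma sym_mx_rotation_eq0 n (A : 'M[R]_n) (x y : 'rV[R]_n) a b :
  A^T = A -> x *m A = a *: x - b *: y -> y *m A = a *: y + b *: x ->
  x != 0 \/ y != 0 -> b = 0.
Proof.
move=> sA xA yA xy0.
have sq_ge0 (r : 'rV[R]_n) : 0 <= (r *m r^T) 0 0.
  by have := dotmx_self_ge0 r^T; rewrite trmxK.
have sq_gt0 (r : 'rV[R]_n) : r != 0 -> 0 < (r *m r^T) 0 0.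
  by move=> r0; have := @dotmx_self_gt0 R _ r^T; rewrite trmxK trmx_eq0; apply.
have s0 : (x *m x^T) 0 0 + (y *m y^T) 0 0 != 0.
  rewrite gt_eqF //; case: xy0 => [/sq_gt0 x0|/sq_gt0 y0].
    by rewrite ltr_pwDl ?sq_ge0.
  by rewrite ltr_pwDr ?sq_ge0.
(* Symmetry of [A] equates [x A y^T] and [y A x^T], forcing
   [b (|x|^2 + |y|^2) = 0]. *)
have sym : x *m A *m y^T = y *m A *m x^T.
  by rewrite -[LHS]trmx11 !trmx_mul trmxK sA mulmxA.
have xy : x *m y^T = y *m x^T by rewrite -[LHS]trmx11 trmx_mul trmxK.
move: sym s0; rewrite xA yA mulmxBl mulmxDl -!scalemxAl xy.
move: (x *m x^T) (y *m y^T) (y *m x^T) => X Y Z.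
move=> /(congr1 (fun M : 'M[R]_1 => M 0 0)); rewrite !mxE => e s0.
have : b * (X 0 0 + Y 0 0) = 0.
  have -> : b * (X 0 0 + Y 0 0)
    = (a * Z 0 0 + b * X 0 0) - (a * Z 0 0 - b * Y 0 0) by ring.
  by rewrite -e subrr.
by move/eqP; rewrite mulf_eq0 (negbTE s0) orbF => /eqP.
Qed.

Lemma dotmx_sub_self n (e u : 'cV[R]_n) : e^T *m e = u^T *m u ->
  (e - u)^T *m (e - u) = 2%:R *: ((e - u)^T *m e).
Proof.
move=> ee; have ue : u^T *m e = e^T *m u by rewrite -[LHS]trmx11 trmx_mul trmxK.
rewrite [(e - u)^T]linearB /= !mulmxBl !mulmxBr -ee ue scalerBr.
by rewrite !scaler_nat !mulr2n opprB opprD addrACA.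
Qed.

Lemma reflection_mx n (e u : 'cV[R]_n) : e^T *m e = u^T *m u ->
  exists H : 'M[R]_n, [/\ H^T = H, H *m H = 1%:M & H *m e = u].
Proof.
move=> ee; set w := e - u; have ww := dotmx_sub_self ee; rewrite -/w in ww.
have [w0|w0] := eqVneq w 0.
  exists 1%:M; split; [exact: tr_scalar_mx | exact: mul1mx |].
  by rewrite mul1mx; apply: subr0_eq.
have two0 : 2%:R != 0 :> R by rewrite pnatr_eq0.
set c := (w^T *m w) 0 0; have c0 : c != 0 by rewrite gt_eqF ?dotmx_self_gt0.
have wwc : w^T *m w = c%:M by rewrite [LHS]mx11_scalar.
exists (1%:M - (2%:R / c) *: (w *m w^T)); split.
- by rewrite linearB /= tr_scalar_mx linearZ /= trmx_mul trmxK.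
- rewrite mulmxBl !mulmxBr mul1mx mulmx1 -!scalemxAr -!scalemxAl.
  have -> : w *m w^T *m (w *m w^T) = c *: (w *m w^T).
    by rewrite mulmxA -(mulmxA w) wwc mul_mx_scalar scalemxAl.
  rewrite !scalerA; have -> : 2%:R / c * (2%:R / c) * c = 2%:R / c + 2%:R / c.
    by field.
  by rewrite mul1mx scalerDl opprB addrK subrK.
- have we : w^T *m e = (c / 2%:R)%:M.
    by apply: (scalerI two0); rewrite -ww wwc scale_scalar_mx mulrC divfK.
  rewrite mulmxBl mul1mx -scalemxAl -mulmxA we mul_mx_scalar scalerA.
  by rewrite mulrA divfK // mulfV // scale1r /w opprB addrC subrK.
Qed.

End RealSymmetric.

Section RealEigenvector.
Variable R : rcfType.
Local Open Scope complex_scope.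
Local Notation Re := (@complex.Re R).
Local Notation Im := (@complex.Im R).

Lemma map_Re_mulmx_real m n p (v : 'M[R[i]]_(m, n)) (A : 'M[R]_(n, p)) :
  map_mx Re (v *m map_mx (real_complex R) A) = map_mx Re v *m A.
Proof.
have ReD : {morph Re : a b / a + b} by case=> ? ? [].
apply/matrixP => i j; rewrite !mxE (big_morph _ ReD (erefl : Re 0 = 0)).
apply: eq_bigr => k _; rewrite !mxE.
by case: (v i k) => a b /=; rewrite mulr0 subr0.
Qed.

Lemma map_Im_mulmx_real m n p (v : 'M[R[i]]_(m, n)) (A : 'M[R]_(n, p)) :
  map_mx Im (v *m map_mx (real_complex R) A) = map_mx Im v *m A.
Proof.
have ImD : {morph Im : a b / a + b} by case=> ? ? [].
apply/matrixP => i j; rewrite !mxE (big_morph _ ImD (erefl : Im 0 = 0)).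
apply: eq_bigr => k _; rewrite !mxE.
by case: (v i k) => a b /=; rewrite mulr0 add0r.
Qed.

Lemma map_ReIm_eq0 m n (v : 'M[R[i]]_(m, n)) :
  map_mx Re v = 0 -> map_mx Im v = 0 -> v = 0.
Proof.
move=> /matrixP Re0 /matrixP Im0; apply/matrixP => i j.
by have := Re0 i j; have := Im0 i j; rewrite !mxE; case: (v i j) => a b /= -> ->.
Qed.

Lemma sym_eigenvector n (A : 'M[R]_n.+1) : A^T = A ->
  exists a (w : 'cV[R]_n.+1), w != 0 /\ A *m w = a *: w.
Proof.
move=> sA; pose Ac := map_mx (real_complex R) A.
have [z /eigenvalueP [v vA v0]] := eigenvalue_closed Ac (ltn0Sn n).
pose x := map_mx Re v; pose y := map_mx Im v.
have xA : x *m A = Re z *: x - Im z *: y.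
  rewrite -map_Re_mulmx_real vA; apply/rowP => j; rewrite !mxE.
  by move: (v 0 j) => [c d]; case: (z) => a b.
have yA : y *m A = Re z *: y + Im z *: x.
  rewrite -map_Im_mulmx_real vA; apply/rowP => j; rewrite !mxE.
  by move: (v 0 j) => [c d]; case: (z) => a b /=; rewrite addrC.
have eigen_row (r : 'rV[R]_n.+1) : r != 0 -> r *m A = Re z *: r ->
    exists a (w : 'cV[R]_n.+1), w != 0 /\ A *m w = a *: w.
  move=> r0 rA; exists (Re z), r^T; rewrite trmx_eq0 r0; split=> //.
  by rewrite -sA -trmx_mul rA linearZ.
have xy0 : x != 0 \/ y != 0.
  apply/orP; rewrite -negb_and; apply: contra v0 => /andP[/eqP x0 /eqP y0].
  exact/eqP/map_ReIm_eq0.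
have Imz : Im z = 0 := sym_mx_rotation_eq0 sA xA yA xy0.
case: xy0 => [x0|y0]; [apply: (eigen_row x) | apply: (eigen_row y)] => //.
  by rewrite xA Imz scale0r subr0.
by rewrite yA Imz scale0r addr0.
Qed.

End RealEigenvector.

Section SquareRoot.
Variable R : rcfType.

Lemma sym_eigen_block n (B : 'M[R]_(1 + n)) a :
  B^T = B -> B *m col_mx 1 0 = a *: col_mx 1 0 ->
  B = block_mx a%:M 0 0 (drsubmx B).
Proof.
move=> sB; rewrite -{1}[B]submxK mul_block_col !mulmx0 !addr0 !mulmx1.
rewrite scale_col_mx scaler0 -scalemx1 => /eq_col_mx[ul dl].
rewrite -[B in LHS]submxK ul dl; congr block_mx.
by rewrite -sB -trmx_dlsub dl trmx0.
Qed.

Lemma sym_deflation n (A : 'M[R]_(1 + n)) : A^T = A ->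
  exists H a (D : 'M[R]_n),
    [/\ H^T = H, H *m H = 1%:M, D^T = D & H *m A *m H = block_mx a%:M 0 0 D].
Proof.
move=> sA; have [a [w [w0 Aw]]] := sym_eigenvector sA.
set c := (w^T *m w) 0 0; have c0 : 0 < c by apply: dotmx_self_gt0.
pose u := (Num.sqrt c)^-1 *: w; pose e : 'cV[R]_(1 + n) := col_mx 1 0.
have uu : e^T *m e = u^T *m u.
  rewrite tr_col_mx mul_row_col trmx0 mul0mx addr0 tr_scalar_mx mul1mx.
  rewrite /u -scalemxAr [(_ *: w)^T]linearZ /= -scalemxAl scalerA.
  by rewrite [w^T *m w]mx11_scalar scale_scalar_mx -expr2 exprVn sqr_sqrtr ?ltW // mulVf ?gt_eqF.
have [H [sH HH He]] := reflection_mx uu.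
pose B := H *m A *m H.
have sB : B^T = B by rewrite !trmx_mul sH sA mulmxA.
have Hu : H *m u = e by rewrite -He mulmxA HH mul1mx.
have Au : A *m u = a *: u by rewrite -scalemxAr Aw !scalerA mulrC.
have Be : B *m e = a *: e by rewrite -!mulmxA He Au -scalemxAr Hu.
exists H, a, (drsubmx B); split => //; last exact: sym_eigen_block.
by rewrite trmx_drsub sB.
Qed.

Lemma posdefmx_sqrt n (A : 'M[R]_n) : A^T = A -> posdefmx A ->
  exists S : 'M[R]_n, [/\ S^T = S, posdefmx S & S *m S = A].
Proof.
elim: n A => [|n IH] A sA pA.
  exists 0; split=> [|x|]; first exact: trmx0.
    by rewrite [x]flatmx0 eqxx.
  by rewrite [A]flatmx0 [_ *m _]flatmx0.
have [H [a [D [sH HH sD HAH]]]] := sym_deflation sA.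
have rH : \rank H = n.+1 by apply/mxrank_unit/(mulmx1_unit HH).1.
have /posdefmx_block_diag[pa pD] : posdefmx (block_mx (a%:M : 'M[R]_1) 0 0 D).
  by rewrite -HAH -{1}sH; apply: posdefmx_congr.
have a0 : 0 < a.
  have := pa 1; rewrite trmx1 mul1mx mulmx1 mxE eqxx mulr1n; apply.
  exact: oner_neq0.
have [S' [sS' pS' SS']] := IH D sD pD.
pose K := block_mx ((Num.sqrt a)%:M : 'M[R]_1) 0 0 S'.
have KK : K *m K = H *m A *m H.
  rewrite HAH mulmx_block !mulmx0 !mul0mx !addr0 !add0r SS' -scalar_mxM.
  by rewrite -expr2 sqr_sqrtr ?ltW.
exists (H *m K *m H); split.
- by rewrite !trmx_mul sH tr_block_mx !trmx0 tr_scalar_mx sS' mulmxA.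
- rewrite -{1}sH; apply: posdefmx_congr => //; apply/posdefmx_block_diag.
  by split=> //; apply: posdefmx_scalar; rewrite sqrtr_gt0.
- rewrite !mulmxA -(mulmxA _ H H) HH mulmx1 -(mulmxA _ K K) KK.
  by rewrite !mulmxA HH mul1mx -mulmxA HH mulmx1.
Qed.

End SquareRoot.

Lemma two_level_solve (F : fieldType) n m (A : 'M[F]_n) (P : 'M[F]_(n, m))
    (f dU : 'cV[F]_n) (U : 'cV[F]_m) :
  A \in unitmx ->
  block_mx A (A *m P) (P^T *m A) 0 *m col_mx dU U = col_mx f 0 ->
  invmx A *m f = dU + P *m U /\ P^T *m A *m P *m U = P^T *m f.
Proof.
move=> uA; rewrite mul_block_col mul0mx addr0 => /eq_col_mx[fine galerkin].
split; first by rewrite -fine -mulmxA -mulmxDr mulKmx.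
by rewrite -fine mulmxDr !mulmxA galerkin add0r.
Qed.

Section Saddle.
Variable R : realType.

Lemma saddle_galerkin nu nt mu mt (M : 'M[R]_nu) (B : 'M[R]_(nt, nu))
    (W : 'M[R]_nt) k (Pu : 'M[R]_(nu, mu)) (Pt : 'M[R]_(nt, mt)) :
  (prolong Pu Pt)^T *m saddle M B W k *m prolong Pu Pt
  = saddle (Pu^T *m M *m Pu) (Pt^T *m B *m Pu) (Pt^T *m W *m Pt) k.
Proof.
rewrite /prolong /saddle tr_block_mx !trmx0 !mulmx_block.
rewrite !mulmx0 !mul0mx !addr0 !add0r !trmx_mul trmxK mulmxA.
by rewrite -scalemxAr -scalemxAl.
Qed.

Lemma mul_prolong_col nu nt mu mt (Pu : 'M[R]_(nu, mu)) (Pt : 'M[R]_(nt, mt))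
    (u : 'cV[R]_mu) (t : 'cV[R]_mt) :
  prolong Pu Pt *m col_mx u t = col_mx (Pu *m u) (Pt *m t).
Proof. by rewrite mul_block_col !mul0mx addr0 add0r. Qed.

Lemma tr_prolong nu nt mu mt (Pu : 'M[R]_(nu, mu)) (Pt : 'M[R]_(nt, mt)) :
  (prolong Pu Pt)^T = prolong Pu^T Pt^T.
Proof. by rewrite /prolong tr_block_mx !trmx0. Qed.

Lemma unitmx_saddle nu nt (M : 'M[R]_nu) (B : 'M[R]_(nt, nu)) (W : 'M[R]_nt) k :
  posdefmx M -> posdefmx W -> k != 0 -> saddle M B W k \in unitmx.
Proof.
move=> pM pW k0; apply: unitmx_ker0 => x Ax0.
have pD : posdefmx (block_mx M 0 0 (k ^+ 2 *: W)).
  apply/posdefmx_block_diag; split=> //.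
  by apply: posdefmx_scale; rewrite ?exprn_even_gt0.
apply/eqP; rewrite -(posdefmx_eq0 pD).
have -> : x^T *m block_mx M 0 0 (k ^+ 2 *: W) *m x
        = x^T *m block_mx 1%:M 0 0 (- 1%:M) *m (saddle M B W k *m x).
  rewrite -[x]vsubmxK quad_block_diag tr_col_mx mul_row_block.
  rewrite /saddle mul_block_col !mulmx0 !mulmx1 !addr0 !add0r mul_row_col.
  move: (usubmx x) (dsubmx x) => a b.
  rewrite mulmxN mulmx1 mulNmx !mulmxDr !mulmxA [a^T *m B^T *m b]trmx_bilin trmxK.
  by rewrite -!scalemxAr -!scalemxAl scaleNr opprD opprK addrA addrK.
by rewrite Ax0 mulmx0 mxE.
Qed.

End Saddle.

Lemma whitening_mul_tr (F : fieldType) n m (W S : 'M[F]_n) (S1 : 'M[F]_m)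
    (P : 'M[F]_(n, m)) :
  S^T = S -> S1^T = S1 -> S1 \in unitmx ->
  S *m S = W -> S1 *m S1 = P^T *m W *m P ->
  (invmx S1 *m P^T *m S) *m (invmx S1 *m P^T *m S)^T = 1%:M.
Proof.
move=> sS sS1 uS1 SS S1S1; rewrite !trmx_mul trmxK sS trmx_inv sS1.
rewrite !mulmxA -(mulmxA _ S S) SS -2!(mulmxA (invmx S1)) -S1S1.
by rewrite mulKmx // mulmxV.
Qed.

Section Gaussian.
Variables (R : realType) (d : measure_display) (T : measurableType d).
Variable P : probability T R.

Lemma std_gaussian_vec_coisometry k n (C : 'M[R]_(k, n)) (X : T -> 'cV[R]_n) :
  C *m C^T = 1%:M -> std_gaussian_vec P X ->
  std_gaussian_vec P (fun w => C *m X w).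
Proof.
move=> CC gX t t0.
have Ct0 : C^T *m t != 0.
  by apply: contraNneq t0 => Ct0; rewrite -[t]mul1mx -CC -mulmxA Ct0 mulmx0.
have -> : (fun w => (t^T *m (C *m X w)) 0 0)
          = (fun w => ((C^T *m t)^T *m X w) 0 0).
  by apply/funext => w; rewrite trmx_mul trmxK mulmxA.
have <- : (C^T *m t)^T *m (C^T *m t) = t^T *m t.
  by rewrite trmx_mul trmxK mulmxA -(mulmxA _ C) CC mulmx1.
exact: gX.
Qed.

End Gaussian.

Lemma spd_sqrtP (R : realType) n (W : 'M[R]_n) :
  is_spd W -> is_spd_sqrt (spd_sqrt W) W.
Proof.
case=> sW pW; have [S [sS pS SS]] := posdefmx_sqrt sW pW.
by apply: (@xgetPex _ 0 (is_spd_sqrt^~ W)); exists S.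
Qed.

Unset Implicit Arguments.

Theorem proposition3p1 (R : realType) (d : measure_display)
  (Omega : measurableType d) (P : probability Omega R)
  (nu nt mu mt : nat) (kappa g : R)
  (M : 'M[R]_nu) (B : 'M[R]_(nt, nu)) (W : 'M[R]_nt)
  (Pu : 'M[R]_(nu, mu)) (Pt : 'M[R]_(nt, mt))
  (xi : Omega -> 'cV[R]_nt)
  (ul : Omega -> 'cV[R]_nu) (thl : Omega -> 'cV[R]_nt)
  (du : Omega -> 'cV[R]_nu) (dth : Omega -> 'cV[R]_nt)
  (u1 : Omega -> 'cV[R]_mu) (th1 : Omega -> 'cV[R]_mt) :
  (0 < nu)%N -> (0 < nt)%N -> (0 < mu)%N -> (0 < mt)%N ->
  0 < kappa -> 0 < g ->
  is_spd M -> is_diag_mx W -> (forall i, 0 < W i i) ->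
  \rank Pu = mu -> \rank Pt = mt ->
  std_gaussian_vec P xi ->
  (forall w, col_mx (ul w) (thl w)
     = invmx (saddle M B W kappa) *m rhs nu g (spd_sqrt W) (xi w)) ->
  (forall w,
     block_mx (saddle M B W kappa)
              (saddle M B W kappa *m prolong Pu Pt)
              ((prolong Pu Pt)^T *m saddle M B W kappa) 0
     *m col_mx (col_mx (du w) (dth w)) (col_mx (u1 w) (th1 w))
     = col_mx (rhs nu g (spd_sqrt W) (xi w)) 0) ->
  let A1 := (prolong Pu Pt)^T *m saddle M B W kappa *m prolong Pu Pt in
  let W1 := Pt^T *m W *m Pt in
  let xi1 := fun w => invmx (spd_sqrt W1) *m Pt^T *m spd_sqrt W *m xi w in
  (forall w, thl w = Pt *m th1 w + dth w) /\
  (forall w, col_mx (u1 w) (th1 w)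
     = invmx A1 *m rhs mu g (spd_sqrt W1) (xi1 w)) /\
  std_gaussian_vec P xi1.
Proof.
move=> _ _ _ _ kappa_gt0 _ [sM pM] dW Wpos rPu rPt gxi fine two_level A1 W1 xi1.
have [sW pW] := posdefmx_diag dW Wpos.
have [[sS pS] SS] := spd_sqrtP (conj sW pW).
have [[sS1 pS1] S1S1] : is_spd_sqrt (spd_sqrt W1) W1.
  apply: spd_sqrtP; split; first by rewrite !trmx_mul trmxK sW mulmxA.
  exact: posdefmx_congr.
have uS1 := posdefmx_unit pS1.
have uA := unitmx_saddle B pM pW (lt0r_neq0 kappa_gt0).
have uA1 : A1 \in unitmx.
  rewrite /A1 saddle_galerkin; apply: unitmx_saddle (lt0r_neq0 kappa_gt0).
    exact (posdefmx_congr pM rPu).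
  exact (posdefmx_congr pW rPt).
have coarse_rhs w : (prolong Pu Pt)^T *m rhs nu g (spd_sqrt W) (xi w)
                    = rhs mu g (spd_sqrt W1) (xi1 w).
  rewrite tr_prolong mul_prolong_col mulmx0 /rhs /xi1 -!mulmxA.
  by rewrite mulKVmx // -scalemxAr.
split; [|split] => [w|w|].
- have [fine_split _] := two_level_solve uA (two_level w).
  move: (fine w); rewrite fine_split mul_prolong_col add_col_mx.
  by case/eq_col_mx => _ ->; rewrite addrC.
- have [_ galerkin] := two_level_solve uA (two_level w).
  by rewrite -coarse_rhs -galerkin mulKmx.
- apply: std_gaussian_vec_coisometry gxi.
  exact: whitening_mul_tr sS sS1 uS1 SS S1S1.
Qed.
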